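(* Let $\gamma \ge 1$ be an integer, let $\Gamma$ be a set of $\gamma$ nodes and let $u \notin \Gamma$ be a further node. Set $p = \frac{1}{1+\gamma}$. Perform $r$ independent runs; in each run, every node of $\Gamma \cup \{u\}$ is dropped independently with probability $p$. For $v \in \Gamma$, let $X_v$ be the number of runs in which the set of dropped nodes of $\Gamma \cup \{u\}$ is exactly $\{v\}$ (a ''$1$-dropout of $v$''), and let $\mathbb{E}_1 = r \cdot p\,(1-p)^{\gamma}$ (the common expected value of the $X_v$). Fix $\delta \in (0,1]$. Then there is a constant $C>0$ depending only on $\delta$ such that for every $t>1$ and every $r \ge C\,(\gamma+1)\log(2\gamma t)$ (i.e. $r = \Omega(\gamma \log \gamma t)$), with probability at least $1-\frac{1}{t}$ it holds simultaneously for every $v \in \Gamma$ that $$(1-\delta)\,\mathbb{E}_1 \le X_v \le (1+\delta)\,\mathbb{E}_1 .$$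
   Context: This models a Dropout GNN (DropGNN): the GNN is executed in $r$ independent runs, and in each run each node is removed (''dropped'') independently with probability $p$. $\Gamma$ is the ''neighborhood of interest'' around the node $u$, of size $\gamma = |\Gamma|$ (not counting $u$). For a subset $S \subseteq \Gamma$, an $|S|$-dropout of $S$ in a run means that exactly the nodes of $S$ (and not $u$, nor any other node of $\Gamma$) are dropped in that run. The choice $p = 1/(1+\gamma)$ maximizes the probability $p(1-p)^\gamma$ of a given $1$-dropout. *)

From HB Require Import structures.
From mathcomp Require Import all_boot all_order all_algebra.
From mathcomp Require Import reals exp.
Set Implicit Arguments. Unset Strict Implicit. Unset Printing Implicit Defensive.
Import Order.TTheory GRing.Theory Num.Theory.
Local Open Scope ring_scope.

(* Nodes: a finite type [T] = Gamma ∪ {u}.  An outcome of [r] runs records,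
   for each run, the set of dropped nodes. *)
Section DropGNN.
Variables (R : realType) (T : finType) (r : nat) (p : R).

Definition outcome := {ffun 'I_r -> {set T}}.

Definition run_prob (S : {set T}) : R :=
  \prod_(x : T) (if x \in S then p else 1 - p).

Definition outcome_prob (w : outcome) : R := \prod_(i < r) run_prob (w i).

Definition Pr (E : pred outcome) : R := \sum_(w : outcome | E w) outcome_prob w.

Definition X1 (w : outcome) (v : T) : nat := #|[set i : 'I_r | w i == [set v]]|.

End DropGNN.

From mathcomp Require Import all_boot all_order all_algebra.
From mathcomp Require Import reals exp sequences.
From mathcomp Require Import ring lra zify.
Set Implicit Arguments. Unset Strict Implicit. Unset Printing Implicit Defensive.
Import Order.TTheory GRing.Theory Num.Theory.
Local Open Scope ring_scope.

(* Each X_v counts successes in r independent trials of probability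
   q = p (1 - p)^gamma, so E[a^X_v] = (1 + (a - 1) q)^r <= exp ((a - 1) r q).
   Exponential Markov with the tilts a = exp (-delta/2) and a = exp (delta/4)
   bounds each tail by exp (-delta^2 mu / 6), where mu = r q, and a union bound
   over the gamma nodes and both tails leaves a failure probability of at most
   2 gamma exp (-delta^2 mu / 6).  For p = 1/(1+gamma), (1 - p)^gamma >= 1/e,
   so mu >= r / (e (gamma+1)); hence r >= (12 e / delta^2) (gamma+1)
   ln (2 gamma t) gives failure probability at most 2 gamma / (2 gamma t)^2 <= 1/t. *)

Lemma chernoff_lower_exponent (R : realType) (d : R) : 0 < d <= 1 ->
  expR (- (d / 2)) - 1 + d / 2 * (1 - d) <= - (d ^+ 2 / 6).
Proof.
move=> /andP[d0 d1].
have e0 := expR_gt0 (- (d / 2)).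
have einv : expR (- (d / 2)) * (1 + d / 2) <= 1.
  rewrite -[leRHS](mulVf (lt0r_neq0 (expR_gt0 (d / 2)))) -expRN.
  by rewrite ler_wpM2l ?expR_ge1Dx // ltW.
have pade : 1 <= (1 + d / 2) * (1 - d / 2 + d ^+ 2 / 3).
  have d3 : 0 <= d ^+ 3 by rewrite exprn_ge0 // ltW.
  have -> : (1 + d / 2) * (1 - d / 2 + d ^+ 2 / 3) = 1 + d ^+ 2 / 12 + d ^+ 3 / 6.
    by field.
  by have := sqr_ge0 d; lra.
nra.
Qed.

Lemma chernoff_upper_exponent (R : realType) (d : R) : 0 < d <= 1 ->
  expR (d / 4) - 1 - d / 4 * (1 + d) <= - (d ^+ 2 / 6).
Proof.
move=> /andP[d0 d1].
have e0 := expR_gt0 (d / 4).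
have einv : expR (d / 4) * (1 - d / 4) <= 1.
  rewrite -[leRHS](mulfV (lt0r_neq0 e0)) -expRN.
  by rewrite ler_wpM2l ?expR_ge1Dx // ltW.
have pade : 1 <= (1 - d / 4) * (1 + d / 4 + d ^+ 2 / 12).
  have d2 : 0 <= d ^+ 2 * (1 - d) by rewrite mulr_ge0 ?sqr_ge0 ?subr_ge0.
  have -> : (1 - d / 4) * (1 + d / 4 + d ^+ 2 / 12) = 1 + d ^+ 2 * (1 - d) / 48.
    by field.
  lra.
nra.
Qed.

Lemma invexpR1_le_pow_one_sub_inv (R : realType) (n : nat) :
  (expR 1)^-1 <= (1 - 1 / (1 + n%:R)) ^+ n :> R.
Proof.
case: n => [|n].
  by rewrite expr0 invf_le1 ?expR_gt0 //; have := expR_ge1Dx (1 : R); lra.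
set k : R := n.+1%:R; have k0 : 0 < k by rewrite ltr0n.
have step : expR (- k^-1) <= 1 - 1 / (1 + k).
  have -> : 1 - 1 / (1 + k) = (1 + k^-1)^-1.
    have n0 : 0 <= n%:R :> R := ler0n _ _.
    by field; apply/andP; split; apply/lt0r_neq0; lra.
  by rewrite expRN lef_pV2 ?expR_ge1Dx // posrE ?addr_gt0 ?invr_gt0 ?expR_gt0.
have -> : (expR 1)^-1 = expR (- k^-1) ^+ n.+1.
  by rewrite -expRM_natr mulNr mulVf ?gt_eqF // expRN.
apply: lerXn2r => //; rewrite nnegrE ?expR_ge0 //.
exact: le_trans (expR_ge0 _) step.
Qed.

Lemma twice_mul_expRN2ln_le (R : realType) (g t : R) : 1 <= g -> 1 < t ->
  2 * g * expR (- (2 * ln (2 * g * t))) <= 1 / t.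
Proof.
move=> g1 t1; have gt1 : 1 < 2 * g * t by nra.
rewrite expRN expRM_natl lnK ?posrE; last lra.
have -> : 2 * g / (2 * g * t) ^+ 2 = (2 * g * t)^-1 / t.
  by field; rewrite !gt_eqF //; lra.
by rewrite ler_pM2r ?invr_gt0 ?invf_le1; lra.
Qed.

Section Dropout.
Variables (R : realType) (T : finType) (r : nat) (p : R).

Lemma sum_run_prob : \sum_(S : {set T}) run_prob p S = 1.
Proof.
rewrite -(@bigA_distr _ _ _ _ _ T (fun=> p) (fun=> 1 - p)) /=.
by apply: big1 => x _; rewrite addrC subrK.
Qed.

Lemma run_prob_set1 (v : T) : run_prob p [set v] = p * (1 - p) ^+ #|T|.-1.
Proof.
rewrite /run_prob (bigD1 v) //= inE eqxx -(cardC1 v) -prodr_const.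
by congr (_ * _); apply: eq_big => x //; rewrite inE => /negPf ->.
Qed.

Lemma sum_outcome_prob : \sum_(w : outcome T r) outcome_prob p w = 1.
Proof.
rewrite -(bigA_distr_bigA (fun (_ : 'I_r) S => run_prob p S)) /=.
by apply: big1 => i _; exact: sum_run_prob.
Qed.

Definition Ex (f : outcome T r -> R) : R :=
  \sum_(w : outcome T r) outcome_prob p w * f w.

Lemma eq_Ex (f g : outcome T r -> R) : f =1 g -> Ex f = Ex g.
Proof. by move=> fg; apply: eq_bigr => w _; rewrite fg. Qed.

Lemma ExD (f g : outcome T r -> R) : Ex (fun w => f w + g w) = Ex f + Ex g.
Proof. by rewrite /Ex -big_split; apply: eq_bigr => w _; rewrite mulrDr. Qed.

Lemma ExZ (c : R) (f : outcome T r -> R) : Ex (fun w => c * f w) = c * Ex f.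
Proof. by rewrite /Ex big_distrr; apply: eq_bigr => w _; rewrite mulrCA. Qed.

Lemma Ex_sum (I : finType) (A : {pred I}) (F : I -> outcome T r -> R) :
  Ex (fun w => \sum_(i in A) F i w) = \sum_(i in A) Ex (F i).
Proof.
rewrite /Ex exchange_big /=; apply: eq_bigr => w _; exact: big_distrr.
Qed.

Lemma Pr_Ex (E : pred (outcome T r)) : Pr p E = Ex (fun w => (E w)%:R).
Proof.
rewrite /Pr big_mkcond; apply: eq_bigr => w _.
by case: (E w); rewrite ?mulr1 ?mulr0.
Qed.

Lemma Pr_predC (E : pred (outcome T r)) : Pr p (predC E) = 1 - Pr p E.
Proof.
by rewrite -sum_outcome_prob (bigID E) /= [RHS]addrC addKr.
Qed.

Lemma Ex_exprX1 (a : R) (v : T) :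
  Ex (fun w => a ^+ X1 w v) = (1 + (a - 1) * run_prob p [set v]) ^+ r.
Proof.
have X1E w : a ^+ X1 w v = \prod_(i < r) (if w i == [set v] then a else 1).
  rewrite -big_mkcond /= prodr_const /X1; congr (_ ^+ _).
  by apply: eq_card => i; rewrite inE.
rewrite /Ex; under eq_bigr => w _ do rewrite X1E /outcome_prob -big_split /=.
rewrite -(bigA_distr_bigA (fun (i : 'I_r) (S : {set T}) =>
   run_prob p S * (if S == [set v] then a else 1))) /=.
rewrite prodr_const card_ord; congr (_ ^+ _).
have sum1 := sum_run_prob; rewrite (bigD1 [set v]) //= in sum1.
rewrite (bigD1 [set v]) //= eqxx.
rewrite (eq_bigr (run_prob p)) => [|S /negPf ->]; last exact: mulr1.
by rewrite -{1}sum1; ring.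
Qed.

Definition one_dropout_mean : R := r%:R * p * (1 - p) ^+ #|T|.-1.

Lemma one_dropout_meanE (v : T) : r%:R * run_prob p [set v] = one_dropout_mean.
Proof. by rewrite run_prob_set1 mulrA. Qed.

Hypothesis p01 : 0 <= p <= 1.

Lemma run_prob_ge0 (S : {set T}) : 0 <= run_prob p S.
Proof.
case/andP: p01 => p0 p1.
by apply: prodr_ge0 => x _; case: ifP; rewrite ?subr_ge0.
Qed.

Lemma run_prob_le1 (S : {set T}) : run_prob p S <= 1.
Proof.
rewrite -sum_run_prob (bigD1 S) //= lerDl.
by apply: sumr_ge0 => S' _; apply: run_prob_ge0.
Qed.

Lemma one_dropout_mean_ge0 : 0 <= one_dropout_mean.
Proof.
by case/andP: p01 => p0 p1; rewrite !mulr_ge0 ?exprn_ge0 ?subr_ge0.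
Qed.

Lemma outcome_prob_ge0 (w : outcome T r) : 0 <= outcome_prob p w.
Proof. by apply: prodr_ge0 => i _; apply: run_prob_ge0. Qed.

Lemma ler_Ex (f g : outcome T r -> R) :
  (forall w, f w <= g w) -> Ex f <= Ex g.
Proof.
by move=> fg; apply: ler_sum => w _; rewrite ler_wpM2l ?outcome_prob_ge0.
Qed.

Lemma le_Pr (E F : pred (outcome T r)) :
  (forall w, E w -> F w) -> Pr p E <= Pr p F.
Proof.
move=> EF; rewrite !Pr_Ex; apply: ler_Ex => w.
by case Ew: (E w); rewrite ?(EF _ Ew).
Qed.

Lemma Pr_le_Ex (E : pred (outcome T r)) (f : outcome T r -> R) :
  (forall w, 0 <= f w) -> (forall w, E w -> 1 <= f w) -> Pr p E <= Ex f.
Proof.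
move=> f0 Ef; rewrite Pr_Ex; apply: ler_Ex => w.
by case Ew: (E w); [exact: Ef | exact: f0].
Qed.

Lemma Pr_predU_le (E F : pred (outcome T r)) :
  Pr p (predU E F) <= Pr p E + Pr p F.
Proof.
rewrite !Pr_Ex -ExD; apply: ler_Ex => w /=.
by rewrite -natrD ler_nat; case: (E w) (F w) => [] [].
Qed.

Lemma Pr_exists_le (I : finType) (A : {pred I}) (E : I -> pred (outcome T r)) :
  Pr p [pred w : outcome T r | [exists i in A, E i w]]
    <= \sum_(i in A) Pr p (E i).
Proof.
under eq_bigr => i _ do rewrite Pr_Ex.
rewrite -Ex_sum; apply: Pr_le_Ex => w; first exact: sumr_ge0.
move=> /existsP[i /andP[iA Eiw]].
by rewrite (bigD1 i) //= Eiw lerDl sumr_ge0.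
Qed.

Lemma Pr_le_expR (E : pred (outcome T r)) (f : outcome T r -> R) (a : R) :
  (forall w, E w -> a <= f w) -> Pr p E <= expR (- a) * Ex (fun w => expR (f w)).
Proof.
move=> Ef; rewrite -ExZ; apply: Pr_le_Ex => w; first by rewrite -expRD expR_ge0.
by move/Ef=> afw; rewrite -expRD addrC -expR0 ler_expR subr_ge0.
Qed.

Lemma Ex_expR_X1 (l : R) (v : T) :
  Ex (fun w => expR (l * (X1 w v)%:R)) <= expR ((expR l - 1) * one_dropout_mean).
Proof.
rewrite (eq_Ex (g := fun w => expR l ^+ X1 w v)) => [|w]; last exact: expRM_natr.
rewrite Ex_exprX1 -(one_dropout_meanE v) mulrCA expRM_natl.
have q0 := run_prob_ge0 [set v]; have q1 := run_prob_le1 [set v].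
have el0 := expR_gt0 l.
apply: lerXn2r; last exact: expR_ge1Dx.
  by rewrite nnegrE; nra.
by rewrite nnegrE expR_ge0.
Qed.

Definition X1_close (d : R) (w : outcome T r) (v : T) : bool :=
  ((1 - d) * one_dropout_mean <= (X1 w v)%:R) &&
  ((X1 w v)%:R <= (1 + d) * one_dropout_mean).

Section Chernoff.
Variables (v : T) (d : R).
Hypothesis d01 : 0 < d <= 1.

Lemma Pr_X1_lt_le :
  Pr p [pred w : outcome T r | (X1 w v)%:R < (1 - d) * one_dropout_mean]
    <= expR (- (d ^+ 2 / 6) * one_dropout_mean).
Proof.
have d0 : 0 <= d / 2 by rewrite divr_ge0 // ltW; case/andP: d01.
have m0 := one_dropout_mean_ge0.
apply: le_trans (Pr_le_expR (f := fun w => - (d / 2) * (X1 w v)%:R)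
                            (a := - (d / 2) * ((1 - d) * one_dropout_mean)) _) _.
  by move=> w /ltW /= Xlt; rewrite !mulNr lerN2 ler_wpM2l.
apply: le_trans (ler_wpM2l (expR_ge0 _) (Ex_expR_X1 _ _)) _.
rewrite -expRD ler_expR.
have := ler_wpM2r m0 (chernoff_lower_exponent d01).
lra.
Qed.

Lemma Pr_X1_gt_le :
  Pr p [pred w : outcome T r | (1 + d) * one_dropout_mean < (X1 w v)%:R]
    <= expR (- (d ^+ 2 / 6) * one_dropout_mean).
Proof.
have d0 : 0 <= d / 4 by rewrite divr_ge0 // ltW; case/andP: d01.
have m0 := one_dropout_mean_ge0.
apply: le_trans (Pr_le_expR (f := fun w => d / 4 * (X1 w v)%:R)
                            (a := d / 4 * ((1 + d) * one_dropout_mean)) _) _.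
  by move=> w /ltW /= Xgt; rewrite ler_wpM2l.
apply: le_trans (ler_wpM2l (expR_ge0 _) (Ex_expR_X1 _ _)) _.
rewrite -expRD ler_expR.
have := ler_wpM2r m0 (chernoff_upper_exponent d01).
lra.
Qed.

Lemma Pr_X1_far_le :
  Pr p [pred w : outcome T r | ~~ X1_close d w v]
    <= 2 * expR (- (d ^+ 2 / 6) * one_dropout_mean).
Proof.
pose lo := [pred w : outcome T r | (X1 w v)%:R < (1 - d) * one_dropout_mean].
pose hi := [pred w : outcome T r | (1 + d) * one_dropout_mean < (X1 w v)%:R].
apply: le_trans (le_Pr (F := predU lo hi) _) _.
  by move=> w /=; rewrite negb_and -!ltNge.
apply: le_trans (Pr_predU_le _ _) _.
by rewrite mulr2n mulrDl mul1r lerD ?Pr_X1_lt_le ?Pr_X1_gt_le.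
Qed.

End Chernoff.

Lemma Pr_all_X1_close_ge (A : {set T}) (d : R) : 0 < d <= 1 ->
  1 - 2 * #|A|%:R * expR (- (d ^+ 2 / 6) * one_dropout_mean) <=
  Pr p [pred w : outcome T r | [forall v in A, X1_close d w v]].
Proof.
move=> d01; set good := [pred w | _].
rewrite -[Pr p good](subKr 1) -Pr_predC lerD2l lerN2.
pose far v := [pred w : outcome T r | ~~ X1_close d w v].
apply: le_trans (le_Pr (F := [pred w | [exists v in A, far v w]]) _) _.
  by move=> w /=; rewrite negb_forall_in.
apply: le_trans (Pr_exists_le A far) _.
apply: le_trans (ler_sum _ (fun v _ => Pr_X1_far_le v d01)) _.
by rewrite sumr_const -[leLHS]mulr_natr mulrAC.
Qed.

End Dropout.

Lemma one_dropout_mean_ge (R : realType) (T : finType) (r : nat) :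
  r%:R / (expR 1 * (1 + (#|T|.-1)%:R)) <=
  one_dropout_mean T r (1 / (1 + (#|T|.-1)%:R) : R).
Proof.
rewrite /one_dropout_mean; set n := #|T|.-1.
have n0 : 0 <= n%:R :> R := ler0n _ _.
have -> : r%:R / (expR 1 * (1 + n%:R))
          = r%:R * (1 / (1 + n%:R)) * (expR 1)^-1 :> R.
  by field; rewrite !gt_eqF ?expR_gt0 //; lra.
by rewrite ler_wpM2l ?invexpR1_le_pow_one_sub_inv // mulr_ge0 ?divr_ge0 //; lra.
Qed.

Theorem theorem1 (R : realType) (delta : R) :
  0 < delta <= 1 ->
  exists C : R, 0 < C /\
  forall (T : finType) (u : T),
    (1 < #|T|)%N ->
    let gamma : nat := #|T|.-1 in
    let p : R := 1 / (1 + gamma%:R) in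
    forall (t : R), 1 < t ->
    forall (r : nat),
      C * (gamma.+1)%:R * ln (2 * gamma%:R * t) <= r%:R ->
      let E1 : R := r%:R * p * (1 - p) ^+ gamma in
      1 - 1 / t <=
        Pr p [pred w : outcome T r |
               [forall v in [set~ u],
                  ((1 - delta) * E1 <= (X1 w v)%:R) &&
                  ((X1 w v)%:R <= (1 + delta) * E1)]].
Proof.
move=> d01; have /andP[d0 _] := d01.
exists (12 * expR 1 / delta ^+ 2); split.
  by rewrite divr_gt0 ?mulr_gt0 ?expR_gt0 ?exprn_gt0.
move=> T u T1 gamma p t t1 r Hr; cbv zeta.
have g1 : 1 <= gamma%:R :> R by rewrite ler1n /gamma; lia.
have p01 : 0 <= p <= 1 by rewrite /p divr_ge0 ?ler_pdivrMr /=; lra.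
apply: le_trans _ (Pr_all_X1_close_ge r p01 [set~ u] d01).
rewrite cardsC1 lerD2l lerN2 -/gamma.
have mean_ge := one_dropout_mean_ge R T r; rewrite -/gamma -/p in mean_ge.
rewrite -[(gamma.+1)%:R]natr1 [_ + 1]addrC in Hr.
set g := gamma%:R in g1 Hr mean_ge *.
set m := one_dropout_mean T r p in mean_ge *.
set L := ln (2 * g * t) in Hr *.
have L_le : 2 * L <= delta ^+ 2 / 6 * m.
  apply: le_trans (ler_wpM2l _ mean_ge); last by rewrite divr_ge0 ?sqr_ge0.
  rewrite -subr_ge0 (_ : _ - _ = delta ^+ 2 / (6 * expR 1 * (1 + g)) *
                               (r%:R - 12 * expR 1 / delta ^+ 2 * (1 + g) * L)).
    rewrite mulr_ge0 ?subr_ge0 // divr_ge0 ?sqr_ge0 //.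
    by rewrite !mulr_ge0 ?expR_ge0 //; lra.
  by field; rewrite !gt_eqF ?expR_gt0 //; lra.
apply: le_trans (twice_mul_expRN2ln_le g1 t1).
by rewrite ler_wpM2l ?ler_expR ?mulNr ?lerN2 //; lra.
Qed.
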